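(* Let $a_1,\dots,a_n\in\mathbb R^d$ be orthonormal ($n\le d$), $T=\sum_{i=1}^n a_i^{\otimes4}$, and $f(x)=\langle T,x^{\otimes4}\rangle$ restricted to the unit sphere $S^{d-1}$. Then every local maximum of $f$ on $S^{d-1}$ is a global maximum; i.e., the local maxima of $f$ on $S^{d-1}$ are exactly $\pm a_1,\dots,\pm a_n$.
   Context: $a^{\otimes4}$ denotes the 4-th order tensor with entries $a_ia_ja_ka_l$; $\langle T,S\rangle$ is the entrywise inner product of tensors. A local maximum on $S^{d-1}$ is a point $x\in S^{d-1}$ having a neighborhood $N$ in $S^{d-1}$ with $f(y)\le f(x)$ for all $y\in N$. *)

From HB Require Import structures.
From mathcomp Require Import all_boot all_order all_algebra.
From mathcomp Require Import all_classical all_reals all_analysis.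
Set Implicit Arguments. Unset Strict Implicit. Unset Printing Implicit Defensive.
Import Order.TTheory GRing.Theory Num.Theory.
Import numFieldNormedType.Exports.
Local Open Scope ring_scope.

Definition tensor4 (R : realType) (n d : nat) (a : 'I_n -> 'rV[R]_d)
  (j k l m : 'I_d) : R :=
  \sum_(i < n) a i 0 j * a i 0 k * a i 0 l * a i 0 m.

Definition ftens (R : realType) (n d : nat) (a : 'I_n -> 'rV[R]_d)
  (x : 'rV[R]_d) : R :=
  \sum_(j < d) \sum_(k < d) \sum_(l < d) \sum_(m < d)
     tensor4 a j k l m * (x 0 j * x 0 k * x 0 l * x 0 m).

Definition sphere (R : realType) (d : nat) (x : 'rV[R]_d) : Prop :=
  \sum_(j < d) x 0 j ^+ 2 = 1.

Definition orthonormal_fam (R : realType) (n d : nat) (a : 'I_n -> 'rV[R]_d) : Prop :=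
  forall i i' : 'I_n, \sum_(j < d) a i 0 j * a i' 0 j = (i == i')%:R.

Definition sphere_local_max (R : realType) (d : nat) (g : 'rV[R]_d -> R)
  (x : 'rV[R]_d) : Prop :=
  sphere x /\ \forall y \near x, sphere y -> g y <= g x.

Definition sphere_global_max (R : realType) (d : nat) (g : 'rV[R]_d -> R)
  (x : 'rV[R]_d) : Prop :=
  sphere x /\ forall y, sphere y -> g y <= g x.

(* Expanding the fourfold sum gives f(x) = sum_i <a_i,x>^4.  By Bessel's
   inequality sum_i <a_i,x>^2 <= |x|^2, so f <= max_i <a_i,x>^2 <= 1 on the
   sphere, with f(+-a_i) = 1: the points +-a_i are global maxima.

   Conversely let x be a local maximum, choose j maximising <a_j,x>^2 and write
   <a_j,x> = sg * c with sg = +-1 and c >= 0, so that f(x) <= c^2.  If x were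
   not +-a_j then c^2 < 1 (equality case of Cauchy-Schwarz).  Along the great
   circle y(s) = (x + s sg a_j) / sqrt(1 + 2cs + s^2) only the j-th coefficient
   moves, which gives f(y(s)) = ((c+s)^4 - c^4 + f(x)) / (1 + 2cs + s^2)^2; an
   elementary study of the resulting quartic in s shows f(y(s)) > f(x) for all
   small s > 0, while y(s) -> x, a contradiction. *)

From HB Require Import structures.
From mathcomp Require Import all_boot all_order all_algebra.
From mathcomp Require Import all_classical all_reals all_analysis.
From mathcomp Require Import ring lra.
Import Order.TTheory GRing.Theory Num.Theory.
Import numFieldNormedType.Exports.
Local Open Scope ring_scope.
Set Implicit Arguments. Unset Strict Implicit. Unset Printing Implicit Defensive.

Definition dot (R : realType) (d : nat) (u v : 'rV[R]_d) : R :=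
  \sum_(k < d) u 0 k * v 0 k.

Lemma dotC (R : realType) (d : nat) (u v : 'rV[R]_d) : dot u v = dot v u.
Proof. by apply: eq_bigr => k _; rewrite mulrC. Qed.

Lemma dotZl (R : realType) (d : nat) (k : R) (u v : 'rV[R]_d) :
  dot (k *: u) v = k * dot u v.
Proof. by rewrite /dot mulr_sumr; apply: eq_bigr => i _; rewrite mxE mulrA. Qed.

Lemma dotZr (R : realType) (d : nat) (k : R) (u v : 'rV[R]_d) :
  dot u (k *: v) = k * dot u v.
Proof. by rewrite dotC dotZl dotC. Qed.

Lemma dotN (R : realType) (d : nat) (u v : 'rV[R]_d) : dot u (- v) = - dot u v.
Proof. by rewrite /dot -sumrN; apply: eq_bigr => k _; rewrite mxE mulrN. Qed.

Lemma sphereE (R : realType) (d : nat) (x : 'rV[R]_d) : sphere x <-> dot x x = 1.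
Proof.
by rewrite /sphere (eq_bigr (fun k => x 0 k * x 0 k)) // => k _; rewrite expr2.
Qed.

Lemma expr4_sum (R : pzRingType) (d : nat) (g : 'I_d -> R) :
  (\sum_(j < d) g j) ^+ 4 =
  \sum_(j < d) \sum_(k < d) \sum_(l < d) \sum_(m < d) g j * g k * g l * g m.
Proof.
set S := \sum_(j < d) g j.
have -> : S ^+ 4 = S * (S * (S * S)) by rewrite !exprS expr0 mulr1.
rewrite {1}/S big_distrl /=; apply: eq_bigr => j _.
rewrite {1}/S big_distrl mulr_sumr /=; apply: eq_bigr => k _.
rewrite {1}/S big_distrl mulr_sumr mulr_sumr /=; apply: eq_bigr => l _.
by rewrite /S !mulr_sumr; apply: eq_bigr => m _; rewrite !mulrA.
Qed.

Lemma ftensE (R : realType) (n d : nat) (a : 'I_n -> 'rV[R]_d) (x : 'rV[R]_d) :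
  ftens a x = \sum_(i < n) dot (a i) x ^+ 4.
Proof.
rewrite /ftens /tensor4 /dot.
under [RHS]eq_bigr do rewrite expr4_sum.
do 4![rewrite [RHS]exchange_big; apply: eq_bigr => ? _].
by rewrite big_distrl; apply: eq_bigr => i _ /=; ring.
Qed.

Lemma ftens_ge0 (R : realType) (n d : nat) (a : 'I_n -> 'rV[R]_d) (x : 'rV[R]_d) :
  0 <= ftens a x.
Proof.
rewrite ftensE sumr_ge0 // => i _.
by rewrite (_ : 4%N = (2 * 2)%N) // exprM sqr_ge0.
Qed.

Lemma ftensN (R : realType) (n d : nat) (a : 'I_n -> 'rV[R]_d) (x : 'rV[R]_d) :
  ftens a (- x) = ftens a x.
Proof.
rewrite !ftensE; apply: eq_bigr => i _.
by rewrite dotN (_ : 4%N = (2 * 2)%N) // !exprM sqrrN.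
Qed.

Lemma sum_kronecker (R : pzSemiRingType) (n : nat) (F : 'I_n -> R) (i : 'I_n) :
  \sum_(i' < n) F i' * (i == i')%:R = F i.
Proof.
rewrite (bigD1 i) //= eqxx mulr1 big1 ?addr0 // => i' /negbTE.
by rewrite eq_sym => ->; rewrite mulr0.
Qed.

(* Bessel's inequality for an orthonormal family: with p = sum_i <a_i,x> a_i,
   0 <= |x - p|^2 = |x|^2 - sum_i <a_i,x>^2. *)
Lemma bessel (R : realType) (n d : nat) (a : 'I_n -> 'rV[R]_d) (x : 'rV[R]_d) :
  orthonormal_fam a -> \sum_(i < n) dot (a i) x ^+ 2 <= dot x x.
Proof.
move=> ortho; pose c i := dot (a i) x.
pose p k := \sum_(i < n) c i * a i 0 k.
have px : \sum_(k < d) x 0 k * p k = \sum_(i < n) c i ^+ 2.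
  rewrite /p; under eq_bigr do rewrite mulr_sumr.
  rewrite exchange_big; apply: eq_bigr => i _.
  by rewrite expr2 [X in _ * X]/c /dot mulr_sumr; apply: eq_bigr => k _; ring.
have pp : \sum_(k < d) p k ^+ 2 = \sum_(i < n) c i ^+ 2.
  rewrite /p; under eq_bigr do rewrite expr2 big_distrl /=.
  rewrite exchange_big; apply: eq_bigr => i _.
  under eq_bigr do rewrite mulr_sumr.
  rewrite exchange_big /= expr2 -[c i * c i](sum_kronecker (fun i' => c i' * c i) i).
  apply: eq_bigr => i' _; rewrite -ortho /dot mulr_sumr.
  by apply: eq_bigr => k _; ring.
have residual : \sum_(k < d) (x 0 k - p k) ^+ 2 =
    dot x x - 2 * \sum_(k < d) x 0 k * p k + \sum_(k < d) p k ^+ 2.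
  by rewrite /dot mulr_sumr -sumrB -big_split; apply: eq_bigr => k _ /=; ring.
have : 0 <= \sum_(k < d) (x 0 k - p k) ^+ 2 by apply: sumr_ge0 => k _; apply: sqr_ge0.
by rewrite residual px pp -/c; lra.
Qed.

Lemma residual_norm (R : realType) (d : nat) (u x : 'rV[R]_d) :
  dot u u = 1 ->
  \sum_(k < d) (x 0 k - dot u x * u 0 k) ^+ 2 = dot x x - dot u x ^+ 2.
Proof.
move=> u1; have [c cE] : {c | dot u x = c} by exists (dot u x).
rewrite cE; transitivity (dot x x - 2 * c * dot u x + c ^+ 2 * dot u u).
  by rewrite /dot !mulr_sumr -sumrB -big_split; apply: eq_bigr => k _ /=; ring.
by rewrite u1 cE; ring.
Qed.

(* Strict Cauchy-Schwarz: a unit vector x other than +-u has <u,x>^2 < 1,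
   since <u,x>^2 = 1 forces the residual x - <u,x> u to vanish. *)
Lemma coef_lt1 (R : realType) (d : nat) (u x : 'rV[R]_d) :
  dot u u = 1 -> sphere x -> x <> u -> x <> - u -> dot u x ^+ 2 < 1.
Proof.
move=> u1 /sphereE x1 xNu xNNu.
have res := residual_norm x u1; rewrite x1 in res.
have : 0 <= \sum_(k < d) (x 0 k - dot u x * u 0 k) ^+ 2.
  by apply: sumr_ge0 => k _; apply: sqr_ge0.
rewrite res subr_ge0 le_eqVlt => /orP[/eqP c1|//]; exfalso.
have xE k : x 0 k = dot u x * u 0 k.
  apply/eqP; rewrite -subr_eq0 -sqrf_eq0; apply/eqP.
  move: res; rewrite -c1 subrr => /psumr_eq0P -> // k' _; exact: sqr_ge0.
move/eqP: c1; rewrite sqrf_eq1 => /orP[]/eqP c1.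
  by apply: xNu; apply/rowP => k; rewrite xE c1 mul1r.
by apply: xNNu; apply/rowP => k; rewrite xE c1 mxE mulN1r.
Qed.

(* On the sphere, a uniform bound m on the squared coefficients bounds f:
   \sum_i <a_i,x>^4 <= m \sum_i <a_i,x>^2 <= m by Bessel. *)
Lemma ftens_le_coef_bound (R : realType) (n d : nat) (a : 'I_n -> 'rV[R]_d)
    (x : 'rV[R]_d) (m : R) :
  orthonormal_fam a -> sphere x -> 0 <= m ->
  (forall i, dot (a i) x ^+ 2 <= m) -> ftens a x <= m.
Proof.
move=> ortho /sphereE x1 m_ge0 bound; rewrite ftensE.
apply: le_trans (_ : \sum_(i < n) dot (a i) x ^+ 2 * m <= _).
  apply: ler_sum => i _.
  by rewrite (_ : 4%N = (2 + 2)%N) // exprD ler_wpM2l ?sqr_ge0.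
by rewrite -big_distrl /= ler_piMl // -x1 bessel.
Qed.

Lemma ftens_le1 (R : realType) (n d : nat) (a : 'I_n -> 'rV[R]_d) (x : 'rV[R]_d) :
  orthonormal_fam a -> sphere x -> ftens a x <= 1.
Proof.
move=> ortho x1; apply: ftens_le_coef_bound => // i.
have /sphereE <- := x1; apply: le_trans (bessel x ortho).
by rewrite (bigD1 i) //= lerDl sumr_ge0 // => i' _; apply: sqr_ge0.
Qed.

Lemma sphereN (R : realType) (d : nat) (x : 'rV[R]_d) : sphere (- x) <-> sphere x.
Proof.
by rewrite /sphere (eq_bigr (fun k => x 0 k ^+ 2)) // => k _; rewrite mxE sqrrN.
Qed.

Lemma pm_a_global_max (R : realType) (n d : nat) (a : 'I_n -> 'rV[R]_d)
    (i : 'I_n) (x : 'rV[R]_d) :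
  orthonormal_fam a -> x = a i \/ x = - a i -> sphere_global_max (ftens a) x.
Proof.
move=> ortho xE.
have ai1 : sphere (a i) by apply/sphereE; rewrite /dot ortho eqxx.
have f_ai : ftens a (a i) = 1.
  rewrite ftensE -[RHS](sum_kronecker (fun=> 1) i).
  apply: eq_bigr => i' _; rewrite /dot ortho eq_sym mul1r.
  by case: (i == i'); rewrite ?expr1n ?expr0n.
have [x1 fx] : sphere x /\ ftens a x = 1.
  by case: xE => ->; rewrite ?sphereN ?ftensN.
by split=> // y y1; rewrite fx ftens_le1.
Qed.

Lemma sign_decomp (R : realDomainType) (t : R) :
  exists2 sg : R, sg * sg = 1 & t = sg * `|t|.
Proof.
have [t_ge0|t_lt0] := lerP 0 t.
  by exists 1; rewrite ?mulr1 // mul1r ger0_norm.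
by exists (-1); rewrite ?mulrNN ?mulr1 // ltr0_norm // mulN1r opprK.
Qed.

(* The denominator 1 + 2cs + s^2 = |x + s u|^2 appearing along a great circle. *)
Definition arc_den (R : realFieldType) (c s : R) : R := 1 + 2 * c * s + s ^+ 2.

Lemma arc_den_gt0 (R : realFieldType) (c s : R) : 0 <= c -> 0 <= s -> 0 < arc_den c s.
Proof. by move=> c_ge0 s_ge0; rewrite /arc_den; nra. Qed.

(* The point with parameter s on the great circle from x towards the unit
   vector u, where c = <u,x>: the normalisation of x + s u. *)
Definition arc (R : realType) (d : nat) (x u : 'rV[R]_d) (c s : R) : 'rV[R]_d :=
  (Num.sqrt (arc_den c s))^-1 *: (x + s *: u).

Lemma arc_coord (R : realType) (d : nat) (x u : 'rV[R]_d) (c s : R) (k : 'I_d) :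
  arc x u c s 0 k = (Num.sqrt (arc_den c s))^-1 * (x 0 k + s * u 0 k).
Proof. by rewrite !mxE. Qed.

Lemma arc_sphere (R : realType) (d : nat) (x u : 'rV[R]_d) (c s : R) :
  sphere x -> dot u u = 1 -> dot u x = c -> 0 <= c -> 0 <= s ->
  sphere (arc x u c s).
Proof.
move=> /sphereE x1 u1 ux c_ge0 s_ge0; apply/sphereE.
have den_gt0 := arc_den_gt0 c_ge0 s_ge0.
transitivity ((Num.sqrt (arc_den c s))^-1 ^+ 2 *
              (dot x x + 2 * s * dot u x + s ^+ 2 * dot u u)).
  rewrite /dot !mulr_sumr -!big_split mulr_sumr; apply: eq_bigr => k _ /=.
  by rewrite !arc_coord; ring.
rewrite x1 u1 ux exprVn sqr_sqrtr ?ltW // mulr1 -(mulrA 2) (mulrC s) mulrA.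
by rewrite mulVf ?gt_eqF.
Qed.

(* Exact value of f along the great circle towards sg * a_j (sg = +-1), when
   <a_j, x> = sg * c: only the j-th coefficient moves, from sg*c to sg*(c+s),
   up to the normalisation. *)
Lemma ftens_arc (R : realType) (n d : nat) (a : 'I_n -> 'rV[R]_d) (x : 'rV[R]_d)
    (j : 'I_n) (sg c s : R) :
  orthonormal_fam a -> sg * sg = 1 -> dot (a j) x = sg * c -> 0 <= c -> 0 <= s ->
  ftens a (arc x (sg *: a j) c s) =
  ((c + s) ^+ 4 - c ^+ 4 + ftens a x) / arc_den c s ^+ 2.
Proof.
move=> ortho sg2 ajx c_ge0 s_ge0.
set r := (Num.sqrt (arc_den c s))^-1.
have r4 : r ^+ 4 = (arc_den c s ^+ 2)^-1.
  rewrite (_ : 4%N = (2 * 2)%N) // exprM /r exprVn sqr_sqrtr ?exprVn //.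
  exact/ltW/arc_den_gt0.
have coef i : dot (a i) (arc x (sg *: a j) c s) = r * (dot (a i) x + s * sg * (i == j)%:R).
  rewrite -ortho /dot !mulr_sumr -big_split mulr_sumr; apply: eq_bigr => k _ /=.
  by rewrite arc_coord mxE -/r; ring.
rewrite !ftensE; under eq_bigr do rewrite coef exprMn.
rewrite -mulr_sumr r4 mulrC; congr (_ / _).
rewrite (bigD1 j) //= [in RHS](bigD1 j) //= eqxx addrA; congr (_ + _).
  rewrite ajx.
  have -> : (sg * c + s * sg * 1) ^+ 4 = (sg * sg) ^+ 2 * (c + s) ^+ 4 by ring.
  have -> : (sg * c) ^+ 4 = (sg * sg) ^+ 2 * c ^+ 4 by ring.
  by rewrite sg2 expr1n !mul1r; ring.
by apply: eq_bigr => i /negbTE ->; rewrite mulr0 addr0.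
Qed.

Lemma quartic_pos_near0 (R : realFieldType) (A B C E : R) :
  0 <= A -> 0 <= C -> 0 < E -> (A = 0 -> 0 <= B) ->
  exists2 del, 0 < del & forall s, 0 < s -> s < del ->
    0 < s * A + s ^+ 2 * B + s ^+ 3 * C + s ^+ 4 * E.
Proof.
move=> A_ge0 C_ge0 E_gt0 B_ge0.
suff [del del_gt0 low] : exists2 del, 0 < del & forall s, 0 < s -> s < del ->
    0 <= s * A + s ^+ 2 * B.
  exists del => // s s_gt0 s_lt; have := low s s_gt0 s_lt.
  have : 0 <= s ^+ 3 * C by rewrite mulr_ge0 // exprn_ge0 // ltW.
  have : 0 < s ^+ 4 * E by rewrite mulr_gt0 // exprn_gt0.
  lra.
have [A_gt0|A_le0] := ltP 0 A; last first.
  have A0 : A = 0 by apply/eqP; rewrite eq_le A_le0 A_ge0.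
  exists 1 => // s _ _; rewrite A0 mulr0 add0r mulr_ge0 ?sqr_ge0 //.
  exact: B_ge0.
have absB1_gt0 : 0 < `|B| + 1 by rewrite ltr_wpDl.
exists (A / (`|B| + 1)); first by rewrite divr_gt0.
move=> s s_gt0; rewrite ltr_pdivlMr // => sB_lt.
have : - (`|B| * s) <= B * s by rewrite -mulNr ler_pM2r // lerNnormlW.
rewrite expr2 -mulrA -mulrDr => BsE; apply: mulr_ge0; first exact: ltW.
have : 0 <= `|B| * s by rewrite mulr_ge0 // ltW.
nra.
Qed.

Lemma ascent_quartic (R : realFieldType) (c F : R) :
  0 <= c -> c ^+ 2 < 1 -> 0 <= F -> F <= c ^+ 2 ->
  exists2 del, 0 < del & forall s, 0 < s -> s < del ->
    F * arc_den c s ^+ 2 < (c + s) ^+ 4 - c ^+ 4 + F.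
Proof.
move=> c_ge0 c_lt1 F_ge0 F_le.
pose A := 4 * c * (c ^+ 2 - F).
pose B := 6 * c ^+ 2 - F * (2 + 4 * c ^+ 2).
have B_ge0 : A = 0 -> 0 <= B.
  move/eqP; rewrite /A mulf_eq0 mulf_eq0 pnatr_eq0 /= subr_eq0.
  case/orP => [/eqP c0 | /eqP Fc]; last by rewrite /B -Fc; nra.
  have F0 : F = 0 by move: F_le; rewrite c0 expr2 mulr0; lra.
  by rewrite /B c0 F0 expr2 !(mulr0, mul0r) subr0.
have A_ge0 : 0 <= A by rewrite /A; nra.
have C_ge0 : 0 <= 4 * c * (1 - F) by nra.
have E_gt0 : 0 < 1 - F by lra.
have [del del_gt0 pos] := quartic_pos_near0 A_ge0 C_ge0 E_gt0 B_ge0.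
exists del => // s s_gt0 s_lt; rewrite -subr_gt0.
have -> : (c + s) ^+ 4 - c ^+ 4 + F - F * arc_den c s ^+ 2 =
  s * A + s ^+ 2 * B + s ^+ 3 * (4 * c * (1 - F)) + s ^+ 4 * (1 - F).
  by rewrite /A /B /arc_den; ring.
exact: pos.
Qed.

Lemma arc_cvg (R : realType) (d : nat) (x u : 'rV[R]_d) (c : R) :
  (arc x u c s @[s --> (0 : R)] --> x)%classic.
Proof.
have arc0 : arc x u c 0 = x.
  by rewrite /arc /arc_den mulr0 expr0n /= !addr0 sqrtr1 invr1 scale1r scale0r addr0.
rewrite -[X in (_ --> X)%classic]arc0; apply: cvgZ.
  apply: cvgV; first by rewrite /arc_den mulr0 expr0n /= !addr0 sqrtr1 oner_neq0.
  apply: continuous_cvg; first exact: sqrt_continuous.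
  apply: cvgD; first apply: cvgD.
  - exact: cvg_cst.
  - by apply: cvgMl_tmp; exact: cvg_id.
  - by rewrite expr2; apply: cvgM; exact: cvg_id.
apply: cvgD; first exact: cvg_cst.
by apply: cvgZ; [exact: cvg_id | exact: cvg_cst].
Qed.

Lemma not_local_max_of_ascent (R : realType) (d : nat) (g : 'rV[R]_d -> R)
    (x : 'rV[R]_d) (y : R -> 'rV[R]_d) (del : R) :
  (y s @[s --> (0 : R)] --> x)%classic -> 0 < del ->
  (forall s, 0 < s -> s < del -> sphere (y s) /\ g x < g (y s)) ->
  ~ sphere_local_max g x.
Proof.
move=> yx del_gt0 ascent [_ xmax].
have /nbhs_ballP[e /= e_gt0 near_max] := yx _ xmax.
pose s := Num.min e del / 2.
have m_gt0 : 0 < Num.min e del by rewrite lt_min e_gt0.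
have s_gt0 : 0 < s by rewrite divr_gt0.
have m_le_e : Num.min e del <= e by rewrite ge_min lexx.
have m_le_del : Num.min e del <= del by rewrite ge_min lexx orbT.
have s_lt_e : s < e by rewrite /s; lra.
have s_lt_del : s < del by rewrite /s; lra.
have [ys gys] := ascent s s_gt0 s_lt_del.
have s_ball : ball (0 : R) e s by rewrite /ball /= sub0r normrN gtr0_norm.
by have := near_max s s_ball ys; rewrite leNgt gys.
Qed.

(* Main step: a local maximum is +-a_j for the index j maximising <a_j,x>^2.
   Otherwise <a_j,x> = sg*c with c^2 < 1 and f(x) <= c^2, and moving along the
   great circle towards sg*a_j strictly increases f. *)
Lemma local_max_pm_a (R : realType) (n d : nat) (a : 'I_n -> 'rV[R]_d)
    (x : 'rV[R]_d) :
  (0 < n)%N -> orthonormal_fam a -> sphere_local_max (ftens a) x ->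
  exists i : 'I_n, x = a i \/ x = - a i.
Proof.
move=> n_gt0 ortho xmax; have x1 := xmax.1.
pose j := [arg max_(i > Ordinal n_gt0) dot (a i) x ^+ 2]%O.
have jmax i : dot (a i) x ^+ 2 <= dot (a j) x ^+ 2.
  by rewrite /j; case: arg_maxP => //= k _; apply.
exists j; apply: contrapT => /not_orP[xNa xNNa].
have aj1 : dot (a j) (a j) = 1 by rewrite /dot ortho eqxx.
have [sg sg2 ajx] := sign_decomp (dot (a j) x).
pose c : R := `|dot (a j) x|; rewrite -/c in ajx.
have c_ge0 : 0 <= c := normr_ge0 _.
have c2 : c ^+ 2 = dot (a j) x ^+ 2 := real_normK (num_real _).
have F_le : ftens a x <= c ^+ 2.
  by apply: ftens_le_coef_bound; rewrite ?c2 ?sqr_ge0.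
have c_lt1 : c ^+ 2 < 1 by rewrite c2 coef_lt1.
have [del del_gt0 ascent] := ascent_quartic c_ge0 c_lt1 (ftens_ge0 a x) F_le.
apply: (not_local_max_of_ascent (arc_cvg (sg *: a j) c) del_gt0 _ xmax).
move=> s s_gt0 s_lt_del; have s_ge0 : 0 <= s := ltW s_gt0; split.
  by apply: arc_sphere; rewrite ?dotZl ?dotZr ?aj1 ?ajx ?mulrA ?sg2 ?mulr1 ?mul1r.
rewrite ftens_arc // ltr_pdivlMr ?exprn_gt0 ?arc_den_gt0 //.
exact: ascent.
Qed.

Theorem theorem5p2 (R : realType) (n d : nat) (a : 'I_n -> 'rV[R]_d) :
  (0 < n)%N -> (n <= d)%N -> orthonormal_fam a ->
  (forall x, sphere_local_max (ftens a) x -> sphere_global_max (ftens a) x) /\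
  (forall x, sphere_local_max (ftens a) x <->
             exists i : 'I_n, x = a i \/ x = - a i).
Proof.
move=> n_gt0 _ ortho.
have pm_a_max x : (exists i : 'I_n, x = a i \/ x = - a i) ->
    sphere_global_max (ftens a) x.
  by case=> i; apply: pm_a_global_max.
split=> [x /(local_max_pm_a n_gt0 ortho) /pm_a_max //| x].
split; first exact: local_max_pm_a.
move=> /pm_a_max[x1 xmax]; split=> //.
by apply: filterE => y; apply: xmax.
Qed.
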